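(* For all $n\ge 1$, $f(n)\ge 2n^2+4n+1$.
   Context: For $n\ge 1$, $A_n$ denotes the finite integral symmetric relation algebra with atoms $1'$, $r$, $b_1,\dots,b_n$, all symmetric, in which a diversity cycle $xyz$ is mandatory (i.e. $x;y\ge z$) if and only if it involves $r$, and forbidden (i.e. $x;y\cdot z=0$) otherwise. A representation over a set $U$ is an embedding into the full relation algebra on $U\times U$. $\operatorname{Spec}(A)$ is the set of cardinals $\alpha\le\omega$ such that $A$ has a representation over a set of cardinality $\alpha$, and $f(n)=\min\operatorname{Spec}(A_n)$. *)

From mathcomp Require Import all_boot.
Set Implicit Arguments. Unset Strict Implicit. Unset Printing Implicit Defensive.

(* Atoms of A_n, encoded as 'I_(n+2):
   0 = the identity atom 1', 1 = r, k+2 = b_(k+1) (k < n).  All atoms are symmetric. *)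
Definition atom (n : nat) := 'I_n.+2.

Definition is_id {n} (a : atom n) : bool := nat_of_ord a == 0.
Definition is_r  {n} (a : atom n) : bool := nat_of_ord a == 1.

(* Composition of two atoms, as a set of atoms (the atoms below x;y).
   - 1' is the identity for composition;
   - for diversity atoms x, y: 1' <= x;y iff y is the converse of x, i.e. y = x
     (all atoms symmetric);
   - for a diversity atom z: z <= x;y iff the diversity cycle xyz is mandatory,
     i.e. iff it involves r; otherwise it is forbidden. *)
Definition comp_atom {n} (x y : atom n) : {set atom n} :=
  if is_id x then [set y]
  else if is_id y then [set x]
  else [set z | if is_id z then x == y else [|| is_r x, is_r y | is_r z]].

(* The algebra A_n: the complex algebra on the atoms, i.e. elements are sets of atoms,
   Boolean operations are set operations, composition is the additive extension of
   comp_atom, converse is the identity (all atoms symmetric), identity element {1'}. *)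
Definition An_elt n := {set atom n}.
Definition An_comp {n} (A B : An_elt n) : An_elt n :=
  \bigcup_(x in A) \bigcup_(y in B) comp_atom x y.
Definition An_conv {n} (A : An_elt n) : An_elt n := A.
Definition An_one n : An_elt n := [set a | is_id a].

(* A representation of A_n over a (finite) set U: an embedding (injective homomorphism
   of relation algebras) of A_n into the full relation algebra Re(U) on U x U. *)
Definition representation {n} (U : finType) (h : An_elt n -> rel U) : Prop :=
  [/\ (forall A B x y, h (A :|: B) x y = h A x y || h B x y),
      (forall A x y, h (~: A) x y = ~~ h A x y),
      (forall A B x y, h (An_comp A B) x y = [exists z, h A x z && h B z y]) &
      [/\ (forall A x y, h (An_conv A) x y = h A y x),
      (forall x y, h (An_one n) x y = (x == y)) &
      (forall A B, (forall x y, h A x y = h B x y) -> A = B)]].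

Definition in_Spec_fin (n m : nat) : Prop :=
  exists (U : finType) (h : An_elt n -> rel U), #|U| = m /\ representation h.

From mathcomp Require Import all_boot zify.
Set Implicit Arguments. Unset Strict Implicit. Unset Printing Implicit Defensive.

(* A representation labels each pair of points by the unique atom containing it:
   1' labels exactly the diagonal, a label lying below a;b factors through a third
   point with labels a and b, and a forbidden cycle never closes a triangle.
   Fix a point x; the other points are its r-neighbours R(x) and the union D(x) of
   its b_c-neighbourhoods B_c(x).  For an r-neighbour u of x, w |-> lab(w, u) maps
   B_c(x) onto the n+1 diversity atoms, and u can be chosen so that this map is not
   injective; hence |B_c(x)| >= n+2 and |D(x)| >= n(n+2).  For a b-neighbour y of x,
   bb-cycles close only with r, so D(y) minus x lies in R(x), as does a common
   r-neighbour of x and y outside D(y); thus |R(x)| >= |D(y)| >= n(n+2), and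
   |U| = 1 + |R(x)| + |D(x)| >= 2n^2 + 4n + 1. *)

Definition is_b {n} (a : atom n) : bool := 2 <= a.

Definition r_atom {n} : atom n := @Ordinal n.+2 1 (ltn0Sn n).

Lemma is_b_id n (a : atom n) : is_b a -> ~~ is_id a.
Proof. by rewrite /is_b /is_id; case: (nat_of_ord a). Qed.

Lemma is_b_r n (a : atom n) : is_b a -> ~~ is_r a.
Proof. by rewrite /is_b /is_r; case: (nat_of_ord a) => [|[]]. Qed.

Lemma negb_is_b n (a : atom n) : ~~ is_b a = is_id a || is_r a.
Proof. by rewrite /is_b /is_id /is_r; case: (nat_of_ord a) => [|[|]]. Qed.

Lemma card_is_b n : #|[set a : atom n | is_b a]| = n.
Proof.
rewrite -sum1dep_card big_mkcond 2!big_ord_recl /=.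
by rewrite -[n in RHS]card_ord -sum1_card; apply: eq_bigr.
Qed.

Lemma exists_other_b n (c : atom n) : 2 <= n -> exists2 k : atom n, is_b k & k != c.
Proof.
move=> n2; have [-> | c2] := eqVneq c (inord 2).
  by exists (inord 3); rewrite /is_b -?val_eqE /= !inordK //; lia.
by exists (inord 2); rewrite 1?eq_sym // /is_b inordK //; lia.
Qed.

Lemma is_b_unique n (a c : atom n) : n <= 1 -> is_b a -> is_b c -> a = c.
Proof.
move=> n1 ha hc; apply: ord_inj.
by move: (ltn_ord a) (ltn_ord c) n1 ha hc; rewrite /is_b; lia.
Qed.

Lemma comp_atomE n (a b c : atom n) : ~~ is_id a -> ~~ is_id b ->
  (c \in comp_atom a b) = if is_id c then a == b else [|| is_r a, is_r b | is_r c].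
Proof. by move=> /negbTE a0 /negbTE b0; rewrite /comp_atom a0 b0 inE. Qed.

Lemma card_preimset_sum (T U : finType) (f : U -> T) (P : pred T) :
  #|[set w | P (f w)]| = \sum_(c | P c) #|[set w | f w == c]|.
Proof.
rewrite -sum1dep_card (partition_big f P) //=.
apply: eq_bigr => c Pc; rewrite -sum1dep_card; apply: eq_bigl => w.
by case: eqP => [-> | _]; rewrite ?Pc ?andbF.
Qed.

Section Representation.
Variables (n : nat) (U : finType) (h : An_elt n -> rel U).
Hypothesis hrep : representation h.

Lemma rep_setU A B x y : h (A :|: B) x y = h A x y || h B x y.
Proof. by case: hrep. Qed.

Lemma rep_setC A x y : h (~: A) x y = ~~ h A x y.
Proof. by case: hrep. Qed.

Lemma rep_setT x y : h setT x y.
Proof. by rewrite -(setUCr set0) rep_setU rep_setC orbN. Qed.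

Lemma rep_set0 x y : h set0 x y = false.
Proof. by rewrite -setCT rep_setC rep_setT. Qed.

Lemma rep_setI A B x y : h (A :&: B) x y = h A x y && h B x y.
Proof. by rewrite -[A :&: B]setCK setCI rep_setC rep_setU !rep_setC negb_or !negbK. Qed.

Lemma rep_bigcup (A : An_elt n) (F : atom n -> An_elt n) x y :
  h (\bigcup_(a in A) F a) x y = [exists a in A, h (F a) x y].
Proof.
by rewrite (big_morph (fun B => h B x y) (fun A B => rep_setU A B x y) (rep_set0 x y)) big_orE.
Qed.

Lemma rep_atomsE A x y : h A x y = [exists a in A, h [set a] x y].
Proof.
rewrite -rep_bigcup; congr (h _ x y); apply/setP => a.
by apply/idP/bigcupP => [aA | [b bA]]; [exists a; rewrite ?set11 | rewrite inE => /eqP ->].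
Qed.

Lemma rep_atom_exists x y : exists a, h [set a] x y.
Proof. by have := rep_setT x y; rewrite rep_atomsE => /existsP[a /andP[_ ha]]; exists a. Qed.

Lemma rep_atom_unique a b x y : h [set a] x y -> h [set b] x y -> a = b.
Proof.
move=> ha hb; apply/eqP/negPn/negP => neq_ab.
have disj : [set a] :&: [set b] = set0.
  by apply/setP => c; rewrite !inE; case: eqP => // ->; apply/negbTE.
by have := rep_setI [set a] [set b] x y; rewrite disj rep_set0 ha hb.
Qed.

Definition rep_label x y : atom n := xchoose (rep_atom_exists x y).

Lemma repE A x y : h A x y = (rep_label x y \in A).
Proof.
have hl := xchooseP (rep_atom_exists x y); rewrite rep_atomsE.
apply/existsP/idP => [[a /andP[aA ha]] | lA]; last by exists (rep_label x y); rewrite lA.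
by rewrite /rep_label (rep_atom_unique hl ha).
Qed.

Lemma rep_label_id x y : is_id (rep_label x y) = (x == y).
Proof. by case: hrep => _ _ _ [_ h1 _]; rewrite -h1 repE inE. Qed.

Lemma rep_label_sym x y : rep_label x y = rep_label y x.
Proof.
case: hrep => _ _ _ [hV _ _].
by have := hV [set rep_label x y] x y; rewrite /An_conv !repE !inE eqxx => /esym/eqP.
Qed.

Lemma rep_label_comp x y a b :
  (rep_label x y \in comp_atom a b) = [exists z, (rep_label x z == a) && (rep_label z y == b)].
Proof.
case: hrep => _ _ hM _; have := hM [set a] [set b] x y.
rewrite /An_comp !big_set1 repE => ->.
by apply: eq_existsb => z; rewrite !repE !inE.
Qed.

Lemma rep_card_gt0 : 0 < #|U|.
Proof.
case: hrep => _ _ _ [_ _ hI]; rewrite -cardsT; apply/card_gt0P.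
case: (pickP (@predT U)) => [x _ | U0]; first by exists x.
have : (set0 : An_elt n) = setT by apply: hI => x; have := U0 x.
by move/setP/(_ ord0); rewrite !inE.
Qed.

End Representation.

Section AtomLabelling.
Variables (n : nat) (U : finType) (lab : U -> U -> atom n).
Hypothesis lab_id : forall x y, is_id (lab x y) = (x == y).
Hypothesis lab_sym : forall x y, lab x y = lab y x.
Hypothesis lab_comp : forall x y a b,
  (lab x y \in comp_atom a b) = [exists z, (lab x z == a) && (lab z y == b)].

Lemma lab_mandatory x y a b :
  lab x y \in comp_atom a b -> exists z, lab x z = a /\ lab z y = b.
Proof. by rewrite lab_comp => /existsP[z /andP[/eqP xz /eqP zy]]; exists z. Qed.

Lemma lab_triangle x z y : lab x y \in comp_atom (lab x z) (lab z y).
Proof. by rewrite lab_comp; apply/existsP; exists z; rewrite !eqxx. Qed.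

Lemma lab_exists x a : ~~ is_id a -> exists y, lab x y = a.
Proof.
move=> a0; have : lab x x \in comp_atom a a by rewrite comp_atomE // lab_id !eqxx.
by case/lab_mandatory => y [xy _]; exists y.
Qed.

Lemma lab_r_detour x u c d : is_r (lab x u) -> ~~ is_id c -> ~~ is_id d ->
  exists w, lab x w = c /\ lab w u = d.
Proof.
move=> xu c0 d0; apply: lab_mandatory.
by rewrite comp_atomE // xu !orbT; move: xu; rewrite /is_r /is_id => /eqP ->.
Qed.

Lemma lab_bb_is_r z x y : is_b (lab z x) -> is_b (lab z y) -> x != y -> is_r (lab x y).
Proof.
rewrite (lab_sym z x) => zx zy xy; have := lab_triangle x z y.
rewrite comp_atomE ?(is_b_id zx) ?(is_b_id zy) // lab_id (negbTE xy).
by rewrite (negbTE (is_b_r zx)) (negbTE (is_b_r zy)).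
Qed.

Definition nbhd x c := [set w | lab x w == c].

Lemma card_nbhd_noninj x u c y z : is_r (lab x u) -> ~~ is_id c ->
  y \in nbhd x c -> z \in nbhd x c -> y != z -> lab y u = lab z u ->
  n.+2 <= #|nbhd x c|.
Proof.
move=> xu c0 yc zc yz yzu.
have onto : [set~ ord0] \subset [set lab w u | w in nbhd x c].
  apply/subsetP => d; rewrite !inE => d0.
  have [w [xw wu]] := lab_r_detour xu c0 d0.
  by apply/imsetP; exists w; rewrite ?inE ?xw.
have noninj : #|[set lab w u | w in nbhd x c]| < #|nbhd x c|.
  rewrite ltn_neqAle leq_imset_card andbT; apply: contra yz => /imset_injP inj.
  by rewrite (inj y z).
by have := subset_leq_card onto; rewrite cardsC1 card_ord => /leq_ltn_trans; apply.
Qed.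

Lemma nbhd_r_pair x c : is_b c ->
  exists y z, [/\ lab x y = c, lab x z = c, y != z & is_r (lab y z)].
Proof.
move=> cb; have c0 := is_b_id cb.
have [u xu] := lab_exists x (isT : ~~ is_id (r_atom : atom n)).
have xu_r : is_r (lab x u) by rewrite xu.
have [y [xy yu]] := lab_r_detour xu_r c0 (isT : ~~ is_id (r_atom : atom n)).
have [z [xz zu]] := lab_r_detour xu_r c0 c0.
have yz : y != z by apply/eqP => eq_yz; move: (is_b_r cb); rewrite -zu -eq_yz yu.
by exists y, z; split=> //; apply: (@lab_bb_is_r x); rewrite ?xy ?xz.
Qed.

Lemma card_nbhd_b x c : is_b c -> n.+2 <= #|nbhd x c|.
Proof.
move=> cb; have [y [z [xy xz yz yz_r]]] := nbhd_r_pair x cb.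
have yc : y \in nbhd x c by rewrite inE xy.
have zc : z \in nbhd x c by rewrite inE xz.
have yx : lab y x = c by rewrite lab_sym.
have yz0 : is_id (lab y z) = false by rewrite lab_id (negbTE yz).
(* A common neighbour v of y and z serves as the point u of card_nbhd_noninj;
   when n = 1 it may instead be a third point of B_c(x). *)
have [n2 | n1] : 2 <= n \/ n = 1 by move: (ltn_ord c) cb; rewrite /is_b; lia.
- have [k kb kc] := exists_other_b c n2.
  have [v [yv vz]] : exists v, lab y v = k /\ lab v z = k.
    by apply: lab_mandatory; rewrite comp_atomE ?is_b_id // yz0 yz_r !orbT.
  have xv : x != v by apply: contraNneq kc => eq_xv; rewrite -yv -eq_xv yx.
  apply: (card_nbhd_noninj (u := v) _ (is_b_id cb) yc zc yz); last by rewrite yv lab_sym vz.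
  by apply: (@lab_bb_is_r y); rewrite ?yx ?yv.
- have [v [yv vz]] : exists v, lab y v = r_atom /\ lab v z = r_atom.
    by apply: lab_mandatory; rewrite comp_atomE // yz0 yz_r !orbT.
  have xv : x != v by apply/eqP => eq_xv; move: (is_b_r cb); rewrite -yx eq_xv yv.
  have [xv_b | xv_nb] := boolP (is_b (lab x v)).
    have vc : v \in nbhd x c by rewrite inE (is_b_unique _ xv_b cb) ?n1.
    have v_neq_y : v != y by rewrite -lab_id lab_sym yv.
    have v_neq_z : v != z by rewrite -lab_id vz.
    rewrite n1 (cardsD1 y) (cardsD1 z) (cardsD1 v) !in_setD1 yc zc vc.
    by rewrite eq_sym yz v_neq_y v_neq_z.
  have xv_r : is_r (lab x v) by move: (negb_is_b (lab x v)); rewrite xv_nb lab_id (negbTE xv).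
  apply: (card_nbhd_noninj (u := v) xv_r (is_b_id cb) yc zc yz).
  by rewrite yv lab_sym vz.
Qed.

Definition rnbhd x := [set w | is_r (lab x w)].
Definition bnbhd x := [set w | is_b (lab x w)].

Lemma card_bnbhd x : n * n.+2 <= #|bnbhd x|.
Proof.
rewrite /bnbhd card_preimset_sum -{1}(card_is_b n) -sum_nat_cond_const.
by apply: leq_sum => c; apply: card_nbhd_b.
Qed.

Lemma card_split_nbhd x : #|U| = 1 + #|rnbhd x| + #|bnbhd x|.
Proof.
have xr : x \notin rnbhd x.
  by rewrite inE; move: (lab_id x x); rewrite eqxx /is_id /is_r => /eqP ->.
have compl : ~: bnbhd x = x |: rnbhd x.
  by apply/setP => w; rewrite !inE negb_is_b lab_id eq_sym.
by rewrite -(cardsC (bnbhd x)) compl cardsU1 xr addnC.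
Qed.

Lemma card_bnbhd_le_rnbhd x y : is_b (lab x y) -> #|bnbhd y| <= #|rnbhd x|.
Proof.
move=> xy.
have [w [xw wy]] : exists w, lab x w = r_atom /\ lab w y = r_atom.
  by apply: lab_mandatory; rewrite comp_atomE //= eqxx; case: ifP.
have sub : w |: (bnbhd y :\ x) \subset rnbhd x.
  apply/subsetP => v; rewrite !inE => /predU1P[-> | /andP[vx yv]]; first by rewrite xw.
  by apply: (@lab_bb_is_r y) yv _; rewrite 1?lab_sym // eq_sym.
have wy_b : w \notin bnbhd y by rewrite inE lab_sym wy.
have xy_b : x \in bnbhd y by rewrite inE lab_sym.
have := subset_leq_card sub; rewrite cardsU1 in_setD1 (negbTE wy_b) andbF.
by rewrite (cardsD1 x (bnbhd y)) xy_b.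
Qed.

Theorem labelling_card_ge (x : U) : 1 <= n -> 2 * n ^ 2 + 4 * n + 1 <= #|U|.
Proof.
move=> n1; have [y xy] := lab_exists x (isT : ~~ is_id (Ordinal (n1 : 2 < n.+2))).
have xy_b : is_b (lab x y) by rewrite xy.
have := card_bnbhd_le_rnbhd xy_b; have := card_bnbhd x; have := card_bnbhd y.
rewrite (card_split_nbhd x); nia.
Qed.

End AtomLabelling.

Theorem mainTheorem8 (n : nat) : 1 <= n ->
  forall m : nat, in_Spec_fin n m -> 2 * n ^ 2 + 4 * n + 1 <= m.
Proof.
move=> n1 m [U [h [<- hrep]]].
have /card_gt0P[x _] : 0 < #|[set: U]| by rewrite cardsT (rep_card_gt0 hrep).
exact: labelling_card_ge (rep_label_id hrep) (rep_label_sym hrep) (rep_label_comp hrep) x n1.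
Qed.
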